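(* Let $\mathbb{R}$ be a strict Reedy category and let $G$ be a crossed $\mathbb{R}$-group compatible with the Reedy structure of $\mathbb{R}$. Then there is a unique dualizable generalized Reedy structure on the total category $\mathbb{R}G$ for which the embedding $\mathbb{R}\hookrightarrow\mathbb{R}G$ is a morphism of generalized Reedy categories.
   Context: A strict Reedy category is a small category $\mathbb{R}$ with wide subcategories $\mathbb{R}^+,\mathbb{R}^-$ and degree $d:\mathrm{Ob}(\mathbb{R})\to\mathbb{N}$ such that non-identity morphisms of $\mathbb{R}^+$ (resp. $\mathbb{R}^-$) strictly raise (resp. lower) degree and every morphism factors uniquely as a morphism of $\mathbb{R}^-$ followed by one of $\mathbb{R}^+$. A generalized Reedy structure on a small category $\mathbb{C}$: wide subcategories $\mathbb{C}^+,\mathbb{C}^-$ and degree $d$ such that (i) non-invertible morphisms of $\mathbb{C}^+$ (resp. $\mathbb{C}^-$) strictly raise (resp. lower) degree, and isomorphisms preserve degree; (ii) $\mathbb{C}^+\cap\mathbb{C}^-=\mathrm{Iso}(\mathbb{C})$; (iii) every morphism $f$ factors as $f=gh$ with $g\in\mathbb{C}^+$, $h\in\mathbb{C}^-$, uniquely up to isomorphism; (iv) if $\theta f=f$ with $\theta$ an isomorphism and $f\in\mathbb{C}^-$ then $\theta$ is an identity. It is dualizable if moreover (iv)$'$: if $f\theta=f$ with $\theta$ an isomorphism and $f\in\mathbb{C}^+$ then $\theta$ is an identity. A morphism of generalized Reedy categories is a functor preserving $(-)^+$, $(-)^-$ and degree. A crossed $\mathbb{R}$-group $G$ is a set-valued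 presheaf on $\mathbb{R}$ (action of $\alpha:s\to r$ written $\alpha^*:G_r\to G_s$) with a group structure on each $G_r$ (neutral $e_r$) and left actions $g_*$ of $G_r$ on each $\mathrm{Hom}_{\mathbb{R}}(s,r)$, satisfying for $g,h\in G_r$, $\alpha:s\to r$, $\beta:t\to s$: $g_*(\alpha\beta)=g_*(\alpha)\circ\alpha^*(g)_*(\beta)$, $g_*(1_r)=1_r$, $\alpha^*(gh)=h_*(\alpha)^*(g)\cdot\alpha^*(h)$, $\alpha^*(e_r)=e_s$. The total category $\mathbb{R}G$ has the objects of $\mathbb{R}$, morphisms $r\to s$ pairs $(\alpha,g)$ with $\alpha:r\to s$ in $\mathbb{R}$, $g\in G_r$, composition $(\alpha,g)\circ(\beta,h)=(\alpha\cdot g_*(\beta),\beta^*(g)\cdot h)$; $\mathbb{R}\hookrightarrow\mathbb{R}G$ by $\alpha\mapsto(\alpha,e)$. $G$ is compatible with the Reedy structure if (i) for $\alpha:r\to s$ in $\mathbb{R}^{\pm}$ and $g\in G_s$, $g_*(\alpha)\in\mathbb{R}^{\pm}$; (ii) if $\alpha:r\to s$ is in $\mathbb{R}^-$ and $g\in G_s$ satisfies $\alpha^*(g)=e_r$ and $g_*(\alpha)=\alpha$, then $g=e_s$. *)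

Set Implicit Arguments.
Unset Strict Implicit.

Record CatData := {
  Ob : Type;
  Hom : Ob -> Ob -> Type;
  cid : forall a, Hom a a;
  ccomp : forall a b c, Hom b c -> Hom a b -> Hom a c }.
Arguments Hom : clear implicits.
Arguments cid {c0} a.
Arguments ccomp {c0 a b c} _ _.

Definition IsCategory (C : CatData) : Prop :=
  (forall a b (f : Hom C a b), ccomp (cid b) f = f) /\
  (forall a b (f : Hom C a b), ccomp f (cid a) = f) /\
  (forall a b c d (f : Hom C c d) (g : Hom C b c) (h : Hom C a b),
      ccomp f (ccomp g h) = ccomp (ccomp f g) h).

Definition is_identity {C : CatData} {a b : Ob C} (f : Hom C a b) : Prop :=
  exists e : a = b,
    match e in _ = b' return Hom C a b' with eq_refl => cid a end = f.

Definition is_iso {C : CatData} {a b : Ob C} (f : Hom C a b) : Prop :=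
  exists g : Hom C b a, ccomp g f = cid a /\ ccomp f g = cid b.

Definition MorPred (C : CatData) := forall a b : Ob C, Hom C a b -> Prop.

Definition wide_subcat {C : CatData} (P : MorPred C) : Prop :=
  (forall a, P a a (cid a)) /\
  (forall a b c (g : Hom C b c) (f : Hom C a b),
      P b c g -> P a b f -> P a c (ccomp g f)).

Record ReedyData (C : CatData) := {
  rplus : MorPred C;
  rminus : MorPred C;
  rdeg : Ob C -> nat }.
Arguments rplus {C} _ {a b} _.
Arguments rminus {C} _ {a b} _.
Arguments rdeg {C} _ _.

Definition IsStrictReedy (C : CatData) (D : ReedyData C) : Prop :=
  wide_subcat (fun a b f => rplus D f) /\
  wide_subcat (fun a b f => rminus D f) /\
  (forall a b (f : Hom C a b),
      rplus D f -> ~ is_identity f -> rdeg D a < rdeg D b) /\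
  (forall a b (f : Hom C a b),
      rminus D f -> ~ is_identity f -> rdeg D b < rdeg D a) /\
  (forall a c (f : Hom C a c),
      exists! p : {b : Ob C & (Hom C a b * Hom C b c)%type},
        rminus D (fst (projT2 p)) /\ rplus D (snd (projT2 p)) /\
        ccomp (snd (projT2 p)) (fst (projT2 p)) = f).

Definition IsGenReedy (C : CatData) (D : ReedyData C) : Prop :=
  wide_subcat (fun a b f => rplus D f) /\
  wide_subcat (fun a b f => rminus D f) /\
  (forall a b (f : Hom C a b),
      rplus D f -> ~ is_iso f -> rdeg D a < rdeg D b) /\
  (forall a b (f : Hom C a b),
      rminus D f -> ~ is_iso f -> rdeg D b < rdeg D a) /\
  (forall a b (f : Hom C a b), is_iso f -> rdeg D a = rdeg D b) /\
  (forall a b (f : Hom C a b), (rplus D f /\ rminus D f) <-> is_iso f) /\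
  (forall a c (f : Hom C a c),
      exists b (h : Hom C a b) (g : Hom C b c),
        rplus D g /\ rminus D h /\ ccomp g h = f) /\
  (forall a b b' c (h : Hom C a b) (g : Hom C b c)
          (h' : Hom C a b') (g' : Hom C b' c),
      rplus D g -> rminus D h -> rplus D g' -> rminus D h' ->
      ccomp g h = ccomp g' h' ->
      exists theta : Hom C b b',
        is_iso theta /\ ccomp theta h = h' /\ ccomp g' theta = g) /\
  (forall a b (theta : Hom C b b) (f : Hom C a b),
      is_iso theta -> rminus D f -> ccomp theta f = f -> theta = cid b).

Definition IsDualizableGenReedy (C : CatData) (D : ReedyData C) : Prop :=
  IsGenReedy D /\
  (forall a b (theta : Hom C a a) (f : Hom C a b),
      is_iso theta -> rplus D f -> ccomp f theta = f -> theta = cid a).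

Record FunctorData (C C' : CatData) := {
  fob : Ob C -> Ob C';
  fmor : forall a b, Hom C a b -> Hom C' (fob a) (fob b) }.
Arguments fob {C C'} _ _.
Arguments fmor {C C'} _ {a b} _.

Definition IsFunctor (C C' : CatData) (F : FunctorData C C') : Prop :=
  (forall a, fmor F (cid a) = cid (fob F a)) /\
  (forall a b c (g : Hom C b c) (f : Hom C a b),
      fmor F (ccomp g f) = ccomp (fmor F g) (fmor F f)).

Definition IsReedyMorphism (C C' : CatData) (D : ReedyData C) (D' : ReedyData C')
    (F : FunctorData C C') : Prop :=
  IsFunctor F /\
  (forall a b (f : Hom C a b), rplus D f -> rplus D' (fmor F f)) /\
  (forall a b (f : Hom C a b), rminus D f -> rminus D' (fmor F f)) /\
  (forall a, rdeg D' (fob F a) = rdeg D a).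

Definition SameReedy (C : CatData) (D D' : ReedyData C) : Prop :=
  (forall a b (f : Hom C a b), rplus D f <-> rplus D' f) /\
  (forall a b (f : Hom C a b), rminus D f <-> rminus D' f) /\
  (forall a, rdeg D a = rdeg D' a).

Record CrossedData (R : CatData) := {
  grp : Ob R -> Type;
  gmul : forall r, grp r -> grp r -> grp r;
  gunit : forall r, grp r;
  ginv : forall r, grp r -> grp r;
  (* gres alpha g = alpha^*(g), for alpha : s -> r *)
  gres : forall s r, Hom R s r -> grp r -> grp s;
  (* gact g alpha = g_*(alpha), for g in G_r, alpha : s -> r *)
  gact : forall r s, grp r -> Hom R s r -> Hom R s r }.
Arguments grp {R} _ _.
Arguments gmul {R} _ {r} _ _.
Arguments gunit {R} _ r.
Arguments ginv {R} _ {r} _.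
Arguments gres {R} _ {s r} _ _.
Arguments gact {R} _ {r s} _ _.

Definition IsCrossedGroup (R : CatData) (G : CrossedData R) : Prop :=
  (forall r (g : grp G r), gres G (cid r) g = g) /\
  (forall t s r (alpha : Hom R s r) (beta : Hom R t s) (g : grp G r),
      gres G (ccomp alpha beta) g = gres G beta (gres G alpha g)) /\
  (forall r (x y z : grp G r), gmul G x (gmul G y z) = gmul G (gmul G x y) z) /\
  (forall r (x : grp G r), gmul G (gunit G r) x = x /\ gmul G x (gunit G r) = x) /\
  (forall r (x : grp G r),
      gmul G (ginv G x) x = gunit G r /\ gmul G x (ginv G x) = gunit G r) /\
  (forall r s (alpha : Hom R s r), gact G (gunit G r) alpha = alpha) /\
  (forall r s (g h : grp G r) (alpha : Hom R s r),
      gact G (gmul G g h) alpha = gact G g (gact G h alpha)) /\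
  (forall r s t (g : grp G r) (alpha : Hom R s r) (beta : Hom R t s),
      gact G g (ccomp alpha beta) =
      ccomp (gact G g alpha) (gact G (gres G alpha g) beta)) /\
  (forall r (g : grp G r), gact G g (cid r) = cid r) /\
  (forall r s (g h : grp G r) (alpha : Hom R s r),
      gres G alpha (gmul G g h) =
      gmul G (gres G (gact G h alpha) g) (gres G alpha h)) /\
  (forall r s (alpha : Hom R s r), gres G alpha (gunit G r) = gunit G s).

Definition IsCompatible (R : CatData) (D : ReedyData R) (G : CrossedData R) : Prop :=
  (forall r s (alpha : Hom R r s) (g : grp G s),
      rplus D alpha -> rplus D (gact G g alpha)) /\
  (forall r s (alpha : Hom R r s) (g : grp G s),
      rminus D alpha -> rminus D (gact G g alpha)) /\
  (forall r s (alpha : Hom R r s) (g : grp G s),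
      rminus D alpha -> gres G alpha g = gunit G r -> gact G g alpha = alpha ->
      g = gunit G s).

Definition TotalCat (R : CatData) (G : CrossedData R) : CatData := {|
  Ob := Ob R;
  Hom := fun r s => (Hom R r s * grp G r)%type;
  cid := fun r => (cid r, gunit G r);
  ccomp := fun r s t (ag : Hom R s t * grp G s) (bh : Hom R r s * grp G r) =>
    (ccomp (fst ag) (gact G (snd ag) (fst bh)),
     gmul G (gres G (fst bh) (snd ag)) (snd bh)) |}.

Definition TotalEmbedding (R : CatData) (G : CrossedData R)
  : FunctorData R (TotalCat G) := {|
  fob := fun r : Ob R => (r : Ob (TotalCat G));
  fmor := fun r s (alpha : Hom R r s) =>
    ((alpha, gunit G r) : Hom (TotalCat G) r s) |}.

(* The Reedy structure on RG is pulled back along the first projection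
   (alpha, g) |-> alpha.  Compatibility makes R^+ and R^- stable under the
   action of G, so these pullbacks are subcategories of RG; every morphism
   splits as (alpha, g) = (alpha, e) o (1, g) with (1, g) invertible, which
   turns the factorizations of R into factorizations in RG, unique up to the
   isomorphisms (1, g).  Since the only isomorphisms of a strict Reedy category
   are identities, the isomorphisms of RG are exactly the (1, g), and
   conditions (iv) and (iv)' reduce to compatibility condition (ii) and to
   cancellation in G.  Conversely, any structure D' making R -> RG a Reedy
   morphism contains these pullbacks; and a morphism (alpha, e) of D'^+ with
   R-factorization alpha = p m factors in RG as (p, e) o (m, e), which by
   uniqueness of D'-factorizations forces (m, e) to be invertible, i.e. m = 1. *)

From Stdlib Require Import Eqdep Classical Lia.

Set Implicit Arguments.
Unset Strict Implicit.

Section Categories.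

Variable C : CatData.
Hypothesis HC : IsCategory C.

Lemma comp_idl a b (f : Hom C a b) : ccomp (cid b) f = f.
Proof. destruct HC as (H & _). apply H. Qed.

Lemma comp_idr a b (f : Hom C a b) : ccomp f (cid a) = f.
Proof. destruct HC as (_ & H & _). apply H. Qed.

Lemma compA a b c d (f : Hom C c d) (g : Hom C b c) (h : Hom C a b) :
  ccomp f (ccomp g h) = ccomp (ccomp f g) h.
Proof. destruct HC as (_ & _ & H). apply H. Qed.

Lemma is_identity_endo a (f : Hom C a a) : is_identity f -> f = cid a.
Proof. intros [e He]. rewrite (UIP_refl _ _ e) in He. now symmetry. Qed.

Lemma is_iso_comp a b c (g : Hom C b c) (f : Hom C a b) :
  is_iso g -> is_iso f -> is_iso (ccomp g f).
Proof.
  intros [g' [Hg'g Hgg']] [f' [Hf'f Hff']]. exists (ccomp f' g'). split.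
  - now rewrite <- compA, (compA g' g f), Hg'g, comp_idl.
  - now rewrite <- compA, (compA f f' g'), Hff', comp_idl.
Qed.

Lemma is_iso_left_inverse a b (g : Hom C b a) (t : Hom C a b) :
  is_iso t -> ccomp g t = cid a -> is_iso g.
Proof.
  intros [t' [Ht't Htt']] Hgt.
  assert (Hg : g = t').
  { rewrite <- (comp_idr g), <- Htt', compA, Hgt, comp_idl. reflexivity. }
  subst t'. exists t. auto.
Qed.

Lemma monotone_section_is_identity (P : MorPred C) (rel : nat -> nat -> Prop)
    (deg : Ob C -> nat) :
  (forall x y, rel x y -> rel y x -> False) ->
  (forall a b (f : Hom C a b), P a b f -> ~ is_identity f -> rel (deg a) (deg b)) ->
  forall a c (f : Hom C a c) (g : Hom C c a),
    P _ _ f -> P _ _ g -> ccomp g f = cid a -> is_identity f.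
Proof.
  intros Hasym Hmono a c f g Pf Pg Hgf.
  destruct (classic (is_identity f)) as [Hf | Hf]; [exact Hf | exfalso].
  destruct (classic (is_identity g)) as [[e He] | Hg].
  - subst c. simpl in He. subst g. rewrite comp_idl in Hgf.
    apply Hf. exists eq_refl. now symmetry.
  - exact (Hasym _ _ (Hmono _ _ _ Pf Hf) (Hmono _ _ _ Pg Hg)).
Qed.

End Categories.

Section StrictReedy.

Variables (R : CatData) (DR : ReedyData R).
Hypotheses (HC : IsCategory R) (HS : IsStrictReedy DR).

Lemma strict_factorization a c (f : Hom R a c) :
  exists b (m : Hom R a b) (p : Hom R b c),
    rminus DR m /\ rplus DR p /\ ccomp p m = f.
Proof.
  destruct HS as (_ & _ & _ & _ & Hf).
  destruct (Hf a c f) as [[b [m p]] [(Hm & Hp & Hpm) _]].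
  now exists b, m, p.
Qed.

Lemma strict_factorization_unique a c b1 b2 (m1 : Hom R a b1) (p1 : Hom R b1 c)
    (m2 : Hom R a b2) (p2 : Hom R b2 c) :
  rminus DR m1 -> rplus DR p1 -> rminus DR m2 -> rplus DR p2 ->
  ccomp p1 m1 = ccomp p2 m2 ->
  existT (fun b => (Hom R a b * Hom R b c)%type) b1 (m1, p1) =
  existT (fun b => (Hom R a b * Hom R b c)%type) b2 (m2, p2).
Proof.
  intros Hm1 Hp1 Hm2 Hp2 E.
  destruct HS as (_ & _ & _ & _ & Hf).
  destruct (Hf a c (ccomp p1 m1)) as [x [_ Hx]].
  rewrite <- (Hx (existT _ b1 (m1, p1))) by (simpl; auto).
  apply Hx. simpl. auto.
Qed.

Lemma strict_factorization_middle a c b1 b2 (m1 : Hom R a b1) (p1 : Hom R b1 c)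
    (m2 : Hom R a b2) (p2 : Hom R b2 c) :
  rminus DR m1 -> rplus DR p1 -> rminus DR m2 -> rplus DR p2 ->
  ccomp p1 m1 = ccomp p2 m2 -> b1 = b2.
Proof.
  intros Hm1 Hp1 Hm2 Hp2 E.
  exact (f_equal (@projT1 _ _) (strict_factorization_unique Hm1 Hp1 Hm2 Hp2 E)).
Qed.

Lemma strict_factorization_unique_at a b c (m1 m2 : Hom R a b) (p1 p2 : Hom R b c) :
  rminus DR m1 -> rplus DR p1 -> rminus DR m2 -> rplus DR p2 ->
  ccomp p1 m1 = ccomp p2 m2 -> m1 = m2 /\ p1 = p2.
Proof.
  intros Hm1 Hp1 Hm2 Hp2 E.
  pose proof (inj_pairT2 _ _ _ _ _ (strict_factorization_unique Hm1 Hp1 Hm2 Hp2 E)) as U.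
  now injection U.
Qed.

Lemma strict_plus_minus_is_identity a b (f : Hom R a b) :
  rplus DR f -> rminus DR f -> is_identity f.
Proof.
  intros Hp Hm.
  destruct HS as ((Pid & _) & (Mid & _) & _).
  assert (E : ccomp f (cid a) = ccomp (cid b) f)
    by now rewrite comp_idl, comp_idr.
  pose proof (strict_factorization_middle (Mid a) Hp Hm (Pid b) E) as Eab.
  subst b. exists eq_refl.
  exact (proj1 (strict_factorization_unique_at (Mid a) Hp Hm (Pid a) E)).
Qed.

Lemma strict_section_is_plus a b (f : Hom R a b) (f' : Hom R b a) :
  ccomp f' f = cid a -> rplus DR f.
Proof.
  intros Hf'f.
  destruct HS as ((Pid & _) & (Mid & Mcomp) & _ & Mdeg & _).
  destruct (strict_factorization f) as (c & m & p & Hm & Hp & Hpm).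
  destruct (strict_factorization (ccomp f' p)) as (c' & m' & p' & Hm' & Hp' & Hpm').
  assert (E : ccomp (cid a) (cid a) = ccomp p' (ccomp m' m)).
  { rewrite comp_idl, compA, Hpm', <- compA, Hpm; auto. }
  pose proof (Mcomp _ _ _ _ _ Hm' Hm) as Hm'm.
  pose proof (strict_factorization_middle (Mid a) (Pid a) Hm'm Hp' E) as Ec.
  subst c'.
  destruct (strict_factorization_unique_at (Mid a) (Pid a) Hm'm Hp' E) as [Em'm _].
  assert (Hid : is_identity m).
  { apply (monotone_section_is_identity HC (P := fun _ _ h => rminus DR h)
             (rel := fun x y => y < x) (deg := rdeg DR)) with (g := m'); auto.
    intros x y; lia. }
  destruct Hid as [e He]. subst c. simpl in He. subst m.
  rewrite (comp_idr HC) in Hpm. now subst p.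
Qed.

Lemma strict_iso_is_identity a b (f : Hom R a b) :
  is_iso f -> is_identity f.
Proof.
  intros [f' [Hf'f Hff']].
  destruct HS as (_ & _ & Pdeg & _).
  apply (monotone_section_is_identity HC (P := fun _ _ h => rplus DR h)
           (rel := lt) (deg := rdeg DR))
    with (g := f'); eauto using strict_section_is_plus; intros; lia.
Qed.

End StrictReedy.

Section GeneralizedReedy.

Variables (C : CatData) (D : ReedyData C).
Hypotheses (HC : IsCategory C) (HD : IsGenReedy D).

Lemma gen_plus_factor_minus_is_iso a b c (f : Hom C a c) (g : Hom C b c) (h : Hom C a b) :
  rplus D f -> rplus D g -> rminus D h -> ccomp g h = f -> is_iso h.
Proof.
  intros Hf Hg Hh Hgh.
  destruct HD as (_ & (Mid & _) & _ & _ & _ & _ & _ & Huniq & _).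
  assert (E : ccomp f (cid a) = ccomp g h) by now rewrite comp_idr.
  destruct (Huniq _ _ _ _ _ _ _ _ Hf (Mid a) Hg Hh E) as (th & Hth & Eh & _).
  rewrite comp_idr in Eh by exact HC. now subst h.
Qed.

Lemma gen_minus_factor_plus_is_iso a b c (f : Hom C a c) (g : Hom C b c) (h : Hom C a b) :
  rminus D f -> rplus D g -> rminus D h -> ccomp g h = f -> is_iso g.
Proof.
  intros Hf Hg Hh Hgh.
  destruct HD as ((Pid & _) & _ & _ & _ & _ & _ & _ & Huniq & _).
  assert (E : ccomp (cid c) f = ccomp g h) by now rewrite comp_idl.
  destruct (Huniq _ _ _ _ _ _ _ _ (Pid c) Hf Hg Hh E) as (th & Hth & _ & Eg).
  exact (is_iso_left_inverse HC Hth Eg).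
Qed.

End GeneralizedReedy.

Section CrossedGroup.

Variables (R : CatData) (G : CrossedData R).
Hypotheses (HC : IsCategory R) (HG : IsCrossedGroup G).

Local Notation RG := (TotalCat G).
Local Notation "⟨ al , g ⟩" := ((al, g) : Hom RG _ _) (format "⟨ al ,  g ⟩").

Lemma gres_cid r (g : grp G r) : gres G (cid r) g = g.
Proof. destruct HG as (H & _). apply H. Qed.

Lemma gres_comp t s r (al : Hom R s r) (be : Hom R t s) (g : grp G r) :
  gres G (ccomp al be) g = gres G be (gres G al g).
Proof. destruct HG as (_ & H & _). apply H. Qed.

Lemma gmulA r (x y z : grp G r) : gmul G x (gmul G y z) = gmul G (gmul G x y) z.
Proof. destruct HG as (_ & _ & H & _). apply H. Qed.

Lemma gmul1l r (x : grp G r) : gmul G (gunit G r) x = x.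
Proof. destruct HG as (_ & _ & _ & H & _). apply H. Qed.

Lemma gmul1r r (x : grp G r) : gmul G x (gunit G r) = x.
Proof. destruct HG as (_ & _ & _ & H & _). apply H. Qed.

Lemma gmulVl r (x : grp G r) : gmul G (ginv G x) x = gunit G r.
Proof. destruct HG as (_ & _ & _ & _ & H & _). apply H. Qed.

Lemma gmulVr r (x : grp G r) : gmul G x (ginv G x) = gunit G r.
Proof. destruct HG as (_ & _ & _ & _ & H & _). apply H. Qed.

Lemma gact_unit r s (al : Hom R s r) : gact G (gunit G r) al = al.
Proof. destruct HG as (_ & _ & _ & _ & _ & H & _). apply H. Qed.

Lemma gactM r s (g h : grp G r) (al : Hom R s r) :
  gact G (gmul G g h) al = gact G g (gact G h al).
Proof. destruct HG as (_ & _ & _ & _ & _ & _ & H & _). apply H. Qed.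

Lemma gact_comp r s t (g : grp G r) (al : Hom R s r) (be : Hom R t s) :
  gact G g (ccomp al be) = ccomp (gact G g al) (gact G (gres G al g) be).
Proof. destruct HG as (_ & _ & _ & _ & _ & _ & _ & H & _). apply H. Qed.

Lemma gact_cid r (g : grp G r) : gact G g (cid r) = cid r.
Proof. destruct HG as (_ & _ & _ & _ & _ & _ & _ & _ & H & _). apply H. Qed.

Lemma gresM r s (g h : grp G r) (al : Hom R s r) :
  gres G al (gmul G g h) = gmul G (gres G (gact G h al) g) (gres G al h).
Proof. destruct HG as (_ & _ & _ & _ & _ & _ & _ & _ & _ & H & _). apply H. Qed.

Lemma gres_unit r s (al : Hom R s r) : gres G al (gunit G r) = gunit G s.
Proof. destruct HG as (_ & _ & _ & _ & _ & _ & _ & _ & _ & _ & H). apply H. Qed.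

Lemma gmul_left_id_unique r (x y : grp G r) : gmul G x y = y -> x = gunit G r.
Proof.
  intro E. rewrite <- (gmul1r x), <- (gmulVr y), gmulA, E. reflexivity.
Qed.

Lemma gmul_right_id_unique r (x y : grp G r) : gmul G x y = x -> y = gunit G r.
Proof.
  intro E. rewrite <- (gmul1l y), <- (gmulVl x), <- gmulA, E. reflexivity.
Qed.

Lemma total_is_category : IsCategory RG.
Proof.
  split; [| split].
  - intros a b [al g]. simpl. now rewrite gact_unit, comp_idl, gres_unit, gmul1l.
  - intros a b [al g]. simpl. now rewrite gact_cid, comp_idr, gres_cid, gmul1r.
  - intros a b c d [al g] [be h] [ga k]. simpl. f_equal.
    + now rewrite gact_comp, gactM, compA.
    + now rewrite gres_comp, gresM, gmulA.
Qed.

Lemma total_split a b (al : Hom R a b) (g : grp G a) :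
  ⟨al, g⟩ = ccomp ⟨al, gunit G a⟩ ⟨cid a, g⟩.
Proof. simpl. now rewrite gact_cid, comp_idr, gres_unit, gmul1l. Qed.

Lemma total_unsplit a b (al : Hom R a b) (g : grp G a) :
  ⟨al, gunit G a⟩ = ccomp ⟨al, g⟩ ⟨cid a, ginv G g⟩.
Proof. simpl. now rewrite gact_cid, comp_idr, gres_cid, gmulVr. Qed.

Lemma total_embed_comp a b c (m : Hom R a b) (p : Hom R b c) :
  ⟨ccomp p m, gunit G a⟩ = ccomp ⟨p, gunit G b⟩ ⟨m, gunit G a⟩.
Proof. simpl. now rewrite gact_unit, gres_unit, gmul1l. Qed.

Lemma total_twist_is_iso a (g : grp G a) : is_iso ⟨cid a, g⟩.
Proof.
  exists ⟨cid a, ginv G g⟩. simpl.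
  now rewrite !gact_cid, !comp_idl, !gres_cid, gmulVl, gmulVr.
Qed.

Lemma total_is_iso_of_identity a b (f : Hom RG a b) :
  is_identity (fst f) -> is_iso f.
Proof.
  destruct f as [al g]. intros [e He]. subst b. simpl in He. subst al.
  apply total_twist_is_iso.
Qed.

Lemma total_iso_fst_iso a b (f : Hom RG a b) : is_iso f -> is_iso (fst f).
Proof.
  destruct f as [al g]. intros Hf.
  assert (Hf' : is_iso ⟨al, gunit G a⟩).
  { rewrite (total_unsplit al g).
    apply (is_iso_comp total_is_category); auto using total_twist_is_iso. }
  destruct Hf' as [[be h] [E1 E2]]. simpl in E1, E2.
  injection E1 as E11 _. injection E2 as E21 E22.
  rewrite gres_unit, gmul1l in E22. subst h.
  rewrite gact_unit in E11, E21.
  now exists be.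
Qed.

Lemma wide_subcat_total (P : MorPred R) :
  (forall r s (al : Hom R r s) (g : grp G s), P r s al -> P r s (gact G g al)) ->
  wide_subcat P -> wide_subcat (fun a b (f : Hom RG a b) => P a b (fst f)).
Proof.
  intros Hact [Pid Pcomp]. split.
  - intros a. apply Pid.
  - intros a b c [be h] [al g]. simpl. auto.
Qed.

Section TotalReedy.

Variable DR : ReedyData R.
Hypotheses (HS : IsStrictReedy DR) (HK : IsCompatible DR G).

Lemma total_iso_fst_identity a b (f : Hom RG a b) : is_iso f -> is_identity (fst f).
Proof. intro Hf. exact (strict_iso_is_identity HC HS (total_iso_fst_iso Hf)). Qed.

Lemma total_iso_endo (a : Ob R) (th : Hom RG a a) : is_iso th -> th = ⟨cid a, snd th⟩.
Proof.
  intro Hth. destruct th as [al t]. simpl. f_equal.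
  exact (is_identity_endo (total_iso_fst_identity Hth)).
Qed.

Definition total_reedy : ReedyData RG := {|
  rplus := fun a b (f : Hom RG a b) => rplus DR (fst f);
  rminus := fun a b (f : Hom RG a b) => rminus DR (fst f);
  rdeg := rdeg DR |}.

Lemma total_plus_minus_iff_iso a b (f : Hom RG a b) :
  rplus DR (fst f) /\ rminus DR (fst f) <-> is_iso f.
Proof.
  destruct HS as ((Pid & _) & (Mid & _) & _). split.
  - intros [Hp Hm]. apply total_is_iso_of_identity.
    exact (strict_plus_minus_is_identity HC HS Hp Hm).
  - intros Hf. destruct (total_iso_fst_identity Hf) as [e He].
    subst b. simpl in He. rewrite <- He. auto.
Qed.

Lemma total_factorization a c (f : Hom RG a c) :
  exists b (h : Hom RG a b) (g : Hom RG b c),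
    rplus DR (fst g) /\ rminus DR (fst h) /\ ccomp g h = f.
Proof.
  destruct f as [al g].
  destruct (strict_factorization HS al) as (b & m & p & Hm & Hp & Hpm).
  exists b, ⟨m, g⟩, ⟨p, gunit G b⟩. simpl.
  now rewrite gact_unit, gres_unit, gmul1l, Hpm.
Qed.

(* The comparison isomorphism is the twist by [k'^-1 k], the quotient of the
   group components of the two [R^+]-parts. *)
Lemma total_factorization_unique (a b b' c : Ob R) (h : Hom RG a b) (g : Hom RG b c)
    (h' : Hom RG a b') (g' : Hom RG b' c) :
  rplus DR (fst g) -> rminus DR (fst h) -> rplus DR (fst g') -> rminus DR (fst h') ->
  ccomp g h = ccomp g' h' ->
  exists th : Hom RG b b', is_iso th /\ ccomp th h = h' /\ ccomp g' th = g.
Proof.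
  destruct h as [m l], g as [p k], h' as [m' l'], g' as [p' k']. simpl.
  intros Hp Hm Hp' Hm' E. injection E as Ealpha Egrp.
  destruct HK as (_ & Kminus & _).
  pose proof (Kminus _ _ _ k Hm) as Hkm. pose proof (Kminus _ _ _ k' Hm') as Hkm'.
  pose proof (strict_factorization_middle HS Hkm Hp Hkm' Hp' Ealpha) as Eb. subst b'.
  destruct (strict_factorization_unique_at HS Hkm Hp Hkm' Hp' Ealpha) as [Em Ep].
  subst p'.
  exists ⟨cid b, gmul G (ginv G k') k⟩.
  split; [apply total_twist_is_iso | split]; simpl.
  - rewrite comp_idl by exact HC. f_equal.
    + now rewrite gactM, Em, <- gactM, gmulVl, gact_unit.
    + rewrite gresM, <- gmulA, Egrp, Em, gmulA, <- gresM, gmulVl, gres_unit.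
      apply gmul1l.
  - now rewrite gact_cid, comp_idr, gres_cid, gmulA, gmulVr, gmul1l.
Qed.

Lemma total_minus_fix a b (th : Hom RG b b) (f : Hom RG a b) :
  is_iso th -> rminus DR (fst f) -> ccomp th f = f -> th = cid b.
Proof.
  intros Hth Hm. rewrite (total_iso_endo Hth). destruct th as [al t], f as [be g].
  simpl in *. intros E. injection E as Eact Eres.
  rewrite comp_idl in Eact by exact HC.
  destruct HK as (_ & _ & Kfix).
  now rewrite (Kfix _ _ _ t Hm (gmul_left_id_unique Eres) Eact).
Qed.

Lemma total_plus_fix a b (th : Hom RG a a) (f : Hom RG a b) :
  is_iso th -> rplus DR (fst f) -> ccomp f th = f -> th = cid a.
Proof.
  intros Hth _. rewrite (total_iso_endo Hth). destruct th as [al t], f as [be g].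
  simpl. intros E. injection E as _ Eres.
  rewrite gres_cid in Eres. now rewrite (gmul_right_id_unique Eres).
Qed.

Lemma total_reedy_dualizable : IsDualizableGenReedy total_reedy.
Proof.
  pose proof HS as (Rplus & Rminus & Pdeg & Mdeg & _).
  destruct HK as (Kplus & Kminus & _).
  assert (Hnid : forall a b (f : Hom RG a b), ~ is_iso f -> ~ is_identity (fst f))
    by eauto using total_is_iso_of_identity.
  split; [| exact total_plus_fix].
  split; [exact (wide_subcat_total Kplus Rplus) |].
  split; [exact (wide_subcat_total Kminus Rminus) |].
  split; [| split; [| split; [| split; [| split; [| split]]]]]; simpl.
  - intros a b f Hf Hn. exact (Pdeg _ _ _ Hf (Hnid _ _ _ Hn)).
  - intros a b f Hf Hn. exact (Mdeg _ _ _ Hf (Hnid _ _ _ Hn)).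
  - intros a b f Hf. now destruct (total_iso_fst_identity Hf) as [<- _].
  - apply total_plus_minus_iff_iso.
  - apply total_factorization.
  - apply total_factorization_unique.
  - apply total_minus_fix.
Qed.

Lemma total_embedding_reedy_morphism :
  IsReedyMorphism DR total_reedy (TotalEmbedding G).
Proof.
  repeat split; simpl; auto.
  intros a b c be al. now rewrite gact_unit, gres_unit, gmul1l.
Qed.

Section Uniqueness.

Variable D' : ReedyData RG.
Hypotheses (HD' : IsGenReedy D') (HF : IsReedyMorphism DR D' (TotalEmbedding G)).

Lemma embedding_plus a b (al : Hom R a b) : rplus DR al -> rplus D' ⟨al, gunit G a⟩.
Proof. destruct HF as (_ & H & _). apply H. Qed.

Lemma embedding_minus a b (al : Hom R a b) : rminus DR al -> rminus D' ⟨al, gunit G a⟩.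
Proof. destruct HF as (_ & _ & H & _). apply H. Qed.

Lemma total_plus_unique a b (f : Hom RG a b) : rplus D' f <-> rplus DR (fst f).
Proof.
  pose proof HD' as ((_ & Qcomp) & _ & _ & _ & _ & Qiso & _).
  destruct f as [al g]. simpl. split.
  - intros Hf.
    assert (He : rplus D' ⟨al, gunit G a⟩).
    { rewrite (total_unsplit al g).
      apply Qcomp; [exact Hf | apply Qiso, total_twist_is_iso]. }
    destruct (strict_factorization HS al) as (c & m & p & Hm & Hp & <-).
    assert (Hiso : is_iso ⟨m, gunit G a⟩).
    { apply (gen_plus_factor_minus_is_iso total_is_category HD' He
               (embedding_plus Hp) (embedding_minus Hm)).
      symmetry. apply total_embed_comp. }
    destruct (total_iso_fst_identity Hiso) as [e Hid]. subst c. simpl in Hid. subst m.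
    now rewrite comp_idr.
  - intros Hp. rewrite (total_split al g).
    apply Qcomp; [exact (embedding_plus Hp) | apply Qiso, total_twist_is_iso].
Qed.

Lemma total_minus_unique a b (f : Hom RG a b) : rminus D' f <-> rminus DR (fst f).
Proof.
  pose proof HD' as (_ & (_ & Ncomp) & _ & _ & _ & Qiso & _).
  destruct f as [al g]. simpl. split.
  - intros Hf.
    assert (He : rminus D' ⟨al, gunit G a⟩).
    { rewrite (total_unsplit al g).
      apply Ncomp; [exact Hf | apply Qiso, total_twist_is_iso]. }
    destruct (strict_factorization HS al) as (c & m & p & Hm & Hp & <-).
    assert (Hiso : is_iso ⟨p, gunit G c⟩).
    { apply (gen_minus_factor_plus_is_iso total_is_category HD' He
               (embedding_plus Hp) (embedding_minus Hm)).
      symmetry. apply total_embed_comp. }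
    destruct (total_iso_fst_identity Hiso) as [e Hid]. subst c. simpl in Hid. subst p.
    now rewrite comp_idl.
  - intros Hm. rewrite (total_split al g).
    apply Ncomp; [exact (embedding_minus Hm) | apply Qiso, total_twist_is_iso].
Qed.

Lemma total_reedy_unique : SameReedy total_reedy D'.
Proof.
  split; [| split]; simpl.
  - intros. symmetry. apply total_plus_unique.
  - intros. symmetry. apply total_minus_unique.
  - intros a. destruct HF as (_ & _ & _ & Hdeg). symmetry. apply Hdeg.
Qed.

End Uniqueness.

End TotalReedy.

End CrossedGroup.

Theorem proposition2p10 (R : CatData) (DR : ReedyData R) (G : CrossedData R) :
  IsCategory R ->
  IsStrictReedy DR ->
  IsCrossedGroup G ->
  IsCompatible DR G ->
  exists D : ReedyData (TotalCat G),
    (IsDualizableGenReedy D /\ IsReedyMorphism DR D (TotalEmbedding G)) /\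
    (forall D' : ReedyData (TotalCat G),
        IsDualizableGenReedy D' /\ IsReedyMorphism DR D' (TotalEmbedding G) ->
        SameReedy D D').
Proof.
  intros HC HS HG HK. exists (total_reedy G DR). split; [split |].
  - exact (total_reedy_dualizable HC HG HS HK).
  - exact (total_embedding_reedy_morphism HG DR).
  - intros D' [[HD' _] HF]. exact (total_reedy_unique HC HG HS HD' HF).
Qed.
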